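(* If $G\subset \mathrm{Diff}^1_+([0,1])$ is $C^1$-close to the identity, then $G$ is without linked fixed points.
   Context: A group $G\subset \mathrm{Diff}^1_+([0,1])$ is $C^1$-close to the identity if there is a sequence $h_n\in \mathrm{Diff}^1_+([0,1])$ such that $h_n g h_n^{-1}\to \mathrm{id}$ in the $C^1$-topology as $n\to\infty$, for every $g\in G$. For a group $G$ of homeomorphisms of $[0,1]$, a pair of successive fixed points of $G$ is a pair $\{a,b\}$, $a<b$, such that $(a,b)$ is a connected component of $[0,1]\setminus \mathrm{Fix}(g)$ for some $g\in G$. Two pairs $\{a,b\}$ and $\{c,d\}$ are linked if $(a,b)\cap\{c,d\}$ or $(c,d)\cap\{a,b\}$ consists of exactly one point. $G$ is without linked fixed points if no two pairs of successive fixed points of $G$ are linked. *)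

From Stdlib Require Import Reals.
Open Scope R_scope.

Definition I01 (x : R) : Prop := 0 <= x <= 1.

Definition has_deriv01 (f f' : R -> R) : Prop :=
  forall x, I01 x ->
    limit1_in (fun y => (f y - f x) / (y - x))
              (fun y => I01 y /\ y <> x) (f' x) x.

Definition cont01 (f : R -> R) : Prop :=
  forall x, I01 x -> limit1_in f I01 (f x) x.

Definition C1_01 (f : R -> R) : Prop :=
  exists f', has_deriv01 f f' /\ cont01 f'.

Definition inverse01 (f finv : R -> R) : Prop :=
  (forall x, I01 x -> I01 (f x)) /\ (forall x, I01 x -> I01 (finv x)) /\
  (forall x, I01 x -> f (finv x) = x) /\ (forall x, I01 x -> finv (f x) = x).

Definition Diff1plus (f : R -> R) : Prop :=
  (exists finv, inverse01 f finv /\ C1_01 f /\ C1_01 finv) /\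
  (forall x y, I01 x -> I01 y -> x < y -> f x < f y).

(* Maps are identified when they agree on [0,1]. *)
Definition eq01 (f g : R -> R) : Prop := forall x, I01 x -> f x = g x.

Definition is_subgroup_Diff1plus (G : (R -> R) -> Prop) : Prop :=
  (forall g, G g -> Diff1plus g) /\
  (exists e, G e /\ eq01 e (fun x => x)) /\
  (forall g h, G g -> G h -> exists k, G k /\ eq01 k (fun x => g (h x))) /\
  (forall g, G g -> exists k, G k /\ eq01 (fun x => k (g x)) (fun x => x)).

Definition C1_conv_to_id (phi : nat -> R -> R) : Prop :=
  forall eps, 0 < eps -> exists N : nat, forall n, (N <= n)%nat ->
    (forall x, I01 x -> Rabs (phi n x - x) < eps) /\
    (exists d, has_deriv01 (phi n) d /\
       forall x, I01 x -> Rabs (d x - 1) < eps).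

Definition C1_close_to_id (G : (R -> R) -> Prop) : Prop :=
  exists (h hinv : nat -> R -> R),
    (forall n, Diff1plus (h n) /\ inverse01 (h n) (hinv n)) /\
    forall g, G g -> C1_conv_to_id (fun n x => h n (g (hinv n x))).

Definition fixpt (g : R -> R) (x : R) : Prop := I01 x /\ g x = x.

(* {a,b} is a pair of successive fixed points of g: a < b and (a,b) is a
   connected component of [0,1] \ Fix(g). *)
Definition successive_fixed (g : R -> R) (a b : R) : Prop :=
  a < b /\ fixpt g a /\ fixpt g b /\ (forall x, a < x < b -> g x <> x).

Definition pair_sfp (G : (R -> R) -> Prop) (a b : R) : Prop :=
  exists g, G g /\ successive_fixed g a b.

Definition in_open (a b x : R) : Prop := a < x < b.

Definition exactly_one_in (a b c d : R) : Prop :=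
  (in_open a b c /\ ~ in_open a b d) \/ (~ in_open a b c /\ in_open a b d).

Definition linked (a b c d : R) : Prop :=
  exactly_one_in a b c d \/ exactly_one_in c d a b.

Definition without_linked_fixed_points (G : (R -> R) -> Prop) : Prop :=
  forall a b c d, pair_sfp G a b -> pair_sfp G c d -> ~ linked a b c d.

From Stdlib Require Import Reals Lra Lia Classical.
Open Scope R_scope.

(* Suppose {a,b} and {c,d} are linked pairs of successive fixed points, say
   a < c < b <= d (the other pattern is the mirror image).  Passing to
   inverses we may pick g in G moving (a,b) up and f in G moving (c,d) down.
   Then c < g c < g (g c) < b, and the f-orbit of g (g c) decreases to the
   fixed point c, so some iterate f^M (g (g c)) lies strictly between c and
   g c.  Conjugating so that f and g both have derivative (1-eps)-close to 1,
   with (1-eps)^M (2-eps) >= 1, the mean value theorem shows that g expands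
   |g c - c| into |g (g c) - c| >= (2-eps) |g c - c|, while M steps of f
   shrink distances to c by at most (1-eps)^M: the iterate cannot get closer
   to c than g c, a contradiction. *)

Lemma has_deriv01_interior (f d : R -> R) (x : R) :
  has_deriv01 f d -> 0 < x < 1 -> derivable_pt_lim f x (d x).
Proof.
  intros Hd Hx eps Heps.
  destruct (Hd x ltac:(unfold I01; lra) eps Heps) as [alp [Halp Hlim]].
  assert (Hdel : 0 < Rmin alp (Rmin x (1 - x))) by (repeat apply Rmin_pos; lra).
  exists (mkposreal _ Hdel); intros h Hh0 Hh; simpl in Hh.
  pose proof (Rmin_l alp (Rmin x (1 - x))); pose proof (Rmin_r alp (Rmin x (1 - x))).
  pose proof (Rmin_l x (1 - x)); pose proof (Rmin_r x (1 - x)).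
  apply Rabs_def2 in Hh.
  specialize (Hlim (x + h)); simpl in Hlim; unfold Rdist in Hlim.
  replace (x + h - x) with h in Hlim by ring.
  apply Hlim; split; [unfold I01; repeat split; lra | apply Rabs_def1; lra].
Qed.

Lemma has_deriv01_continuity (f d : R -> R) (x : R) :
  has_deriv01 f d -> 0 < x < 1 -> continuity_pt f x.
Proof.
  intros Hd Hx; apply derivable_continuous_pt.
  exists (d x); exact (has_deriv01_interior f d x Hd Hx).
Qed.

Lemma derivative_near_one_expansion (f d : R -> R) (eps u v : R) :
  has_deriv01 f d -> (forall x, I01 x -> Rabs (d x - 1) < eps) ->
  0 < u < 1 -> 0 < v < 1 -> (1 - eps) * Rabs (v - u) <= Rabs (f v - f u).
Proof.
  intros Hd Hb Hu Hv.
  assert (ordered : forall p q, 0 < p < 1 -> 0 < q < 1 -> p < q ->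
            (1 - eps) * Rabs (q - p) <= Rabs (f q - f p)).
  { intros p q Hp Hq Hpq.
    destruct (MVT_cor2 f d p q Hpq) as [c [Hmvt Hc]].
    { intros c Hc; apply has_deriv01_interior; auto; lra. }
    rewrite Hmvt, Rabs_mult.
    pose proof (Hb c ltac:(unfold I01; lra)) as Hdc; apply Rabs_def2 in Hdc.
    apply Rmult_le_compat_r; [apply Rabs_pos |].
    apply Rle_trans with (d c); [lra | apply RRle_abs]. }
  destruct (Rtotal_order u v) as [Huv | [-> | Hvu]].
  - now apply ordered.
  - rewrite !Rminus_diag, Rabs_R0; lra.
  - rewrite (Rabs_minus_sym v u), (Rabs_minus_sym (f v) (f u)); now apply ordered.
Qed.

Lemma Diff1plus_basic (g : R -> R) : Diff1plus g ->
  (forall x, I01 x -> I01 (g x)) /\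
  (forall x, I01 x -> exists u, I01 u /\ g u = x) /\
  (forall x, 0 < x < 1 -> continuity_pt g x) /\
  (forall x y, I01 x -> I01 y -> x < y -> g x < g y).
Proof.
  intros [[ginv [[Hmap [Hinvmap [Hright _]]] [[d [Hd _]] _]]] Hmono].
  split; [exact Hmap | split; [| split; [| exact Hmono]]].
  - intros y Hy; exists (ginv y); auto.
  - intros y Hy; exact (has_deriv01_continuity g d y Hd Hy).
Qed.

Lemma increasing_fixing_preserves (g : R -> R) (a b x : R) :
  (forall x y, I01 x -> I01 y -> x < y -> g x < g y) ->
  fixpt g a -> fixpt g b -> a < x < b -> a < g x < b.
Proof.
  intros Hmono [Ia Ga] [Ib Gb] Hx; unfold I01 in *.
  rewrite <- Ga at 1; rewrite <- Gb.
  split; apply Hmono; unfold I01; lra.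
Qed.

Lemma increasing_maps_open_unit (h : R -> R) (x : R) :
  (forall x, I01 x -> I01 (h x)) ->
  (forall x y, I01 x -> I01 y -> x < y -> h x < h y) ->
  0 < x < 1 -> 0 < h x < 1.
Proof.
  intros Hmap Hmono Hx.
  pose proof (Hmap 0 ltac:(unfold I01; lra)); pose proof (Hmap 1 ltac:(unfold I01; lra)).
  assert (h 0 < h x) by (apply Hmono; unfold I01; lra).
  assert (h x < h 1) by (apply Hmono; unfold I01; lra).
  unfold I01 in *; lra.
Qed.

Definition moves_up (g : R -> R) (a b : R) : Prop := forall x, a < x < b -> x < g x.
Definition moves_down (g : R -> R) (a b : R) : Prop := forall x, a < x < b -> g x < x.

(* Intermediate value theorem: a continuous map without fixed points in (a,b)
   moves all points of (a,b) in the same direction. *)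
Lemma displacement_constant_sign (g : R -> R) (a b : R) :
  (forall x, a < x < b -> continuity_pt g x) -> (forall x, a < x < b -> g x <> x) ->
  moves_up g a b \/ moves_down g a b.
Proof.
  intros Hcont Hfree.
  destruct (classic (moves_up g a b)) as [Hup | Hnot]; [now left | right].
  apply not_all_ex_not in Hnot; destruct Hnot as [x1 Hx1].
  apply imply_to_and in Hx1; destruct Hx1 as [Hx1 Hnlt].
  assert (Hg1 : g x1 < x1) by (pose proof (Hfree x1 Hx1); lra).
  intros x2 Hx2; apply Rnot_le_lt; intro Hle.
  assert (Hg2 : x2 < g x2) by (pose proof (Hfree x2 Hx2); lra).
  set (disp := fun t => g t - t).
  assert (Hdisp : forall t, a < t < b -> continuity_pt disp t).
  { intros t Ht; apply continuity_pt_minus; [now apply Hcont |].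
    apply derivable_continuous_pt, derivable_pt_id. }
  destruct (Rtotal_order x1 x2) as [H12 | [-> | H21]]; [| lra |].
  - destruct (Ranalysis5.IVT_interv disp x1 x2) as [z [Hz Hz0]];
      [intros t Ht; apply Hdisp; lra | lra | unfold disp; lra | unfold disp; lra |].
    apply (Hfree z); [lra | unfold disp in Hz0; lra].
  - destruct (Ranalysis5.IVT_interv (- disp)%F x2 x1) as [z [Hz Hz0]];
      [intros t Ht; apply continuity_pt_opp, Hdisp; lra | lra
      | unfold disp, opp_fct; lra | unfold disp, opp_fct; lra |].
    apply (Hfree z); [lra | unfold disp, opp_fct in Hz0; lra].
Qed.

Lemma moving_successive_fixed (k : R -> R) (a b : R) :
  a < b -> fixpt k a -> fixpt k b -> moves_up k a b \/ moves_down k a b ->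
  successive_fixed k a b.
Proof.
  intros Hab Fa Fb Hmove; split; [exact Hab | split; [exact Fa | split; [exact Fb |]]].
  intros x Hx Hfix; destruct Hmove as [Hm | Hm]; specialize (Hm x Hx); lra.
Qed.

Lemma inverse_reverses_direction (g k : R -> R) (a b : R) :
  Diff1plus g -> successive_fixed g a b -> (forall x, I01 x -> k (g x) = x) ->
  fixpt k a /\ fixpt k b /\
  (moves_up g a b -> moves_down k a b) /\ (moves_down g a b -> moves_up k a b).
Proof.
  intros Dg [Hab [Fa [Fb _]]] Hk.
  destruct (Diff1plus_basic g Dg) as [_ [Honto [_ Hmono]]].
  destruct Fa as [Ia Ga], Fb as [Ib Gb].
  assert (preimage : forall x, a < x < b -> exists u, a < u < b /\ g u = x /\ k x = u).
  { intros x Hx; destruct (Honto x ltac:(unfold I01 in *; lra)) as [u [Iu Gu]].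
    exists u; split; [| split; [exact Gu | rewrite <- Gu; now apply Hk]].
    split; apply Rnot_le_lt; intro Hle; destruct (Rle_lt_or_eq_dec _ _ Hle) as [Hlt | ->].
    - pose proof (Hmono u a Iu Ia Hlt); lra.
    - lra.
    - pose proof (Hmono b u Ib Iu Hlt); lra.
    - lra. }
  split; [split; [exact Ia | rewrite <- Ga at 1; now apply Hk] |].
  split; [split; [exact Ib | rewrite <- Gb at 1; now apply Hk] |].
  split; intros Hmove x Hx; destruct (preimage x Hx) as [u [Hu [Gu Ku]]];
    specialize (Hmove u Hu); lra.
Qed.

Lemma successive_fixed_both_directions (G : (R -> R) -> Prop) (a b : R) :
  is_subgroup_Diff1plus G -> pair_sfp G a b ->
  (exists k, G k /\ successive_fixed k a b /\ moves_up k a b) /\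
  (exists k, G k /\ successive_fixed k a b /\ moves_down k a b).
Proof.
  intros [HD [_ [_ Hinv]]] [g [Gg Sg]].
  destruct (Hinv g Gg) as [k [Gk Hk]].
  destruct (inverse_reverses_direction g k a b (HD g Gg) Sg Hk)
    as [Ka [Kb [Kdown Kup]]].
  destruct (Diff1plus_basic g (HD g Gg)) as [_ [_ [Hcont _]]].
  pose proof Sg as [Hab [[Ia _] [[Ib _] Hfree]]].
  assert (Hcont' : forall x, a < x < b -> continuity_pt g x)
    by (intros x Hx; apply Hcont; unfold I01 in *; lra).
  destruct (displacement_constant_sign g a b Hcont' Hfree) as [Hup | Hdown].
  - split; [now exists g |].
    exists k; split; [exact Gk | split; [| exact (Kdown Hup)]].
    apply moving_successive_fixed; auto.
  - split; [| now exists g].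
    exists k; split; [exact Gk | split; [| exact (Kup Hdown)]].
    apply moving_successive_fixed; auto.
Qed.

(* Monotone convergence: if f pushes (c,z] down towards c and is continuous
   there, the orbit of z stays in (c,z] and enters (c,y) for any y > c
   (its limit would otherwise be a fixed point of f in (c,z]). *)
Lemma orbit_descends_to_fixed_point (f : R -> R) (c z y : R) :
  c < z -> c < y -> (forall x, c < x <= z -> c < f x < x) ->
  (forall x, c < x <= z -> continuity_pt f x) ->
  (forall n, c < Nat.iter n f z <= z) /\ exists M, Nat.iter M f z < y.
Proof.
  intros Hcz Hcy Hf Hcont.
  set (u := fun n => Nat.iter n f z).
  assert (Hu : forall n, c < u n <= z).
  { induction n as [| n IH]; simpl; [lra |]; specialize (Hf _ IH); lra. }
  split; [exact Hu |].
  assert (Hdec : Un_decreasing u) by (intro n; specialize (Hf _ (Hu n)); simpl; lra).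
  destruct (decreasing_cv u Hdec) as [l Hl].
  { exists (- c); intros v [n ->]; unfold opp_seq; specialize (Hu n); lra. }
  assert (Hlc : l <= c).
  { apply Rnot_lt_le; intro Hcl.
    assert (Hlz : l <= z) by exact (decreasing_ineq u l Hdec Hl 0).
    assert (Hfl : Un_cv (fun n => f (u n)) l).
    { intros eps Heps; destruct (Hl eps Heps) as [N HN].
      exists N; intros n Hn; apply (HN (S n)); lia. }
    pose proof (UL_sequence _ _ _ (continuity_seq f u l (Hcont l ltac:(lra)) Hl) Hfl).
    pose proof (Hf l ltac:(lra)); lra. }
  destruct (Hl (y - l) ltac:(lra)) as [M HM].
  exists M; specialize (HM M (le_n M)); unfold Rdist in HM; apply Rabs_def2 in HM.
  unfold u in HM; lra.
Qed.

Lemma iter_reflect (f : R -> R) (n : nat) (x : R) :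
  Nat.iter n (fun u => - f (- u)) x = - Nat.iter n f (- x).
Proof.
  induction n as [| n IH]; simpl; [ring |].
  now rewrite IH, Ropp_involutive.
Qed.

(* The mirror image of [orbit_descends_to_fixed_point], obtained by
   conjugating with x |-> -x. *)
Lemma orbit_ascends_to_fixed_point (f : R -> R) (c z y : R) :
  z < c -> y < c -> (forall x, z <= x < c -> x < f x < c) ->
  (forall x, z <= x < c -> continuity_pt f x) ->
  (forall n, z <= Nat.iter n f z < c) /\ exists M, y < Nat.iter M f z.
Proof.
  intros Hzc Hyc Hf Hcont.
  destruct (orbit_descends_to_fixed_point (fun u => - f (- u)) (- c) (- z) (- y))
    as [Hstay [M HM]].
  - lra.
  - lra.
  - intros x Hx; specialize (Hf (- x) ltac:(lra)); lra.
  - intros x Hx.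
    apply (continuity_pt_opp (comp f Ropp)), continuity_pt_comp.
    + apply derivable_continuous_pt, derivable_pt_opp, derivable_pt_id.
    + apply Hcont; lra.
  - split.
    + intro n; specialize (Hstay n); rewrite iter_reflect, Ropp_involutive in Hstay; lra.
    + exists M; rewrite iter_reflect, Ropp_involutive in HM; lra.
Qed.

Definition strictly_between (x y z : R) : Prop := x < y < z \/ z < y < x.

Lemma strictly_between_closer (x y z : R) :
  strictly_between x y z -> Rabs (y - x) < Rabs (z - x).
Proof.
  intros [H | H]; [rewrite !Rabs_right by lra | rewrite !Rabs_left by lra]; lra.
Qed.

Lemma bernoulli_inequality (e : R) (n : nat) : 0 <= e <= 1 -> 1 - INR n * e <= (1 - e) ^ n.
Proof.
  intros He; induction n as [| n IH]; [simpl; lra |].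
  rewrite S_INR; change ((1 - e) ^ S n) with ((1 - e) * (1 - e) ^ n).
  pose proof (pos_INR n); pose proof (pow_le (1 - e) n ltac:(lra)); nra.
Qed.

Lemma expansion_rate_choice (M : nat) :
  exists eps, 0 < eps < 1 /\ 1 <= (1 - eps) ^ M * (2 - eps).
Proof.
  pose proof (pos_INR M) as HM.
  exists (/ (2 * INR M + 2)).
  assert (He : 0 < / (2 * INR M + 2)) by (apply Rinv_0_lt_compat; lra).
  assert (Hinv : / (2 * INR M + 2) * (2 * INR M + 2) = 1) by (field; lra).
  set (e := / (2 * INR M + 2)) in *.
  assert (Hhalf : e <= / 2) by nra.
  split; [lra |].
  pose proof (bernoulli_inequality e M ltac:(lra)).
  apply Rle_trans with ((1 - INR M * e) * (2 - e)); [nra |].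
  apply Rmult_le_compat_r; lra.
Qed.

Lemma iterated_expansion (m C : R) (W : nat -> R) :
  0 <= m -> (forall j, m * Rabs (W j - C) <= Rabs (W (S j) - C)) ->
  forall j, m ^ j * Rabs (W O - C) <= Rabs (W j - C).
Proof.
  intros Hm HW j; induction j as [| j IH]; simpl; [lra |].
  apply Rle_trans with (m * Rabs (W j - C)); [| apply HW].
  rewrite Rmult_assoc; apply Rmult_le_compat_l; lra.
Qed.

(* Y lies between C and Z with
   |Z - Y| >= m |Y - C|, so |Z - C| >= (1 + m) |Y - C|; an orbit starting at Z
   whose distance to C shrinks by a factor at most m per step therefore cannot
   come closer to C than Y within M steps when m^M (1 + m) >= 1. *)
Lemma expansion_overshoots (m C Y Z : R) (W : nat -> R) (M : nat) :
  0 < m -> 1 <= m ^ M * (1 + m) -> strictly_between C Y Z ->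
  m * Rabs (Y - C) <= Rabs (Z - Y) ->
  (forall j, m * Rabs (W j - C) <= Rabs (W (S j) - C)) -> W O = Z ->
  Rabs (Y - C) <= Rabs (W M - C).
Proof.
  intros Hm Hrate HY HZY HW HW0.
  pose proof (iterated_expansion m C W ltac:(lra) HW M) as Hiter.
  rewrite HW0 in Hiter.
  assert (Hsplit : Rabs (Z - C) = Rabs (Z - Y) + Rabs (Y - C)).
  { destruct HY as [H | H];
      [rewrite !Rabs_right by lra | rewrite !Rabs_left by lra]; ring. }
  pose proof (pow_le m M ltac:(lra)); pose proof (Rabs_pos (Y - C)).
  apply Rle_trans with (m ^ M * Rabs (Z - C)); [| exact Hiter].
  rewrite Hsplit; nra.
Qed.

Definition conj_expanding (m : R) (h k : R -> R) : Prop :=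
  forall u v, 0 < u < 1 -> 0 < v < 1 -> m * Rabs (h v - h u) <= Rabs (h (k v) - h (k u)).

Lemma conjugate_expansion (h hinv k d : R -> R) (eps : R) :
  (forall x, I01 x -> I01 (h x)) ->
  (forall x y, I01 x -> I01 y -> x < y -> h x < h y) ->
  (forall x, I01 x -> hinv (h x) = x) ->
  has_deriv01 (fun x => h (k (hinv x))) d -> (forall x, I01 x -> Rabs (d x - 1) < eps) ->
  conj_expanding (1 - eps) h k.
Proof.
  intros Hmap Hmono Hinv Hd Hb u v Hu Hv.
  pose proof (derivative_near_one_expansion _ d eps (h u) (h v) Hd Hb
    (increasing_maps_open_unit h u Hmap Hmono Hu)
    (increasing_maps_open_unit h v Hmap Hmono Hv)) as Hexp.
  cbv beta in Hexp; now rewrite !Hinv in Hexp by (unfold I01; lra).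
Qed.

Lemma simultaneous_conjugation (G : (R -> R) -> Prop) (f g : R -> R) (eps : R) :
  C1_close_to_id G -> G f -> G g -> 0 < eps ->
  exists h, (forall x, I01 x -> I01 (h x)) /\
    (forall x y, I01 x -> I01 y -> x < y -> h x < h y) /\
    conj_expanding (1 - eps) h f /\ conj_expanding (1 - eps) h g.
Proof.
  intros [h [hinv [Hh Hconv]]] Gf Gg Heps.
  destruct (Hconv f Gf eps Heps) as [Nf HNf], (Hconv g Gg eps Heps) as [Ng HNg].
  set (n := Nat.max Nf Ng).
  destruct (HNf n ltac:(lia)) as [_ [df [Hdf Hbf]]].
  destruct (HNg n ltac:(lia)) as [_ [dg [Hdg Hbg]]].
  destruct (Hh n) as [[_ Hmono] [Hmap [_ [_ Hinv]]]].
  exists (h n); split; [exact Hmap | split; [exact Hmono | split]].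
  - exact (conjugate_expansion (h n) (hinv n) f df eps Hmap Hmono Hinv Hdf Hbf).
  - exact (conjugate_expansion (h n) (hinv n) g dg eps Hmap Hmono Hinv Hdg Hbg).
Qed.

Lemma increasing_preserves_between (h : R -> R) (x y z : R) :
  (forall x y, I01 x -> I01 y -> x < y -> h x < h y) ->
  I01 x -> I01 y -> I01 z -> strictly_between x y z -> strictly_between (h x) (h y) (h z).
Proof.
  intros Hmono Ix Iy Iz [H | H]; [left | right]; split; apply Hmono; auto; lra.
Qed.

(* In coordinates where f and g are both
   (1 - eps)-expanding, with (1 - eps)^M (2 - eps) >= 1, this contradicts
   [expansion_overshoots]. *)
Lemma no_overshooting_orbit (G : (R -> R) -> Prop) (f g : R -> R) (c : R) (M : nat) :
  C1_close_to_id G -> G f -> G g -> f c = c ->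
  0 < c < 1 -> 0 < g c < 1 -> (forall j, 0 < Nat.iter j f (g (g c)) < 1) ->
  strictly_between c (g c) (g (g c)) ->
  strictly_between c (Nat.iter M f (g (g c))) (g c) -> False.
Proof.
  intros Hclose Gf Gg Hfc Hc Hgc Horbit Hg Hf.
  destruct (expansion_rate_choice M) as [eps [Heps Hrate]].
  destruct (simultaneous_conjugation G f g eps Hclose Gf Gg ltac:(lra))
    as [h [Hmap [Hmono [Hexpf Hexpg]]]].
  pose proof (Horbit O) as Hggc; simpl in Hggc.
  set (W := fun j => h (Nat.iter j f (g (g c)))).
  assert (Hfar : Rabs (h (g c) - h c) <= Rabs (W M - h c)).
  { apply (expansion_overshoots (1 - eps) (h c) (h (g c)) (h (g (g c))) W M).
    - lra.
    - now replace (1 + (1 - eps)) with (2 - eps) by ring.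
    - apply increasing_preserves_between; auto; unfold I01; lra.
    - exact (Hexpg c (g c) Hc Hgc).
    - intro j; pose proof (Hexpf c _ Hc (Horbit j)) as Hj.
      rewrite Hfc in Hj; exact Hj.
    - reflexivity. }
  pose proof (Horbit M) as HM.
  pose proof (strictly_between_closer (h c) (W M) (h (g c))
    (increasing_preserves_between h c (Nat.iter M f (g (g c))) (g c) Hmono
       ltac:(unfold I01; lra) ltac:(unfold I01; lra) ltac:(unfold I01; lra) Hf)).
  lra.
Qed.

(* The points c < g c < g (g c)
   lie in (c,b), and the f-orbit of g (g c) falls to c, hence passes
   strictly between c and g c: the forbidden configuration. *)
Lemma no_crossing_from_inside (G : (R -> R) -> Prop) (f g : R -> R) (a b c d : R) :
  is_subgroup_Diff1plus G -> C1_close_to_id G -> G f -> G g ->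
  successive_fixed g a b -> successive_fixed f c d ->
  moves_up g a b -> moves_down f c d -> a < c < b -> b <= d -> False.
Proof.
  intros [HD _] Hclose Gf Gg [Hab [Fa [Fb _]]] [Hcd [Fc [Fd _]]] Hup Hdown Hc Hbd.
  destruct (Diff1plus_basic g (HD g Gg)) as [_ [_ [_ gmono]]].
  destruct (Diff1plus_basic f (HD f Gf)) as [_ [_ [fcont fmono]]].
  pose proof Fa as [Ia _]; pose proof Fb as [Ib _]; pose proof Fc as [_ Hfc].
  unfold I01 in Ia, Ib.
  pose proof (increasing_fixing_preserves g a b c gmono Fa Fb ltac:(lra)).
  pose proof (Hup c ltac:(lra)).
  pose proof (increasing_fixing_preserves g a b (g c) gmono Fa Fb ltac:(lra)).
  pose proof (Hup (g c) ltac:(lra)).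
  destruct (orbit_descends_to_fixed_point f c (g (g c)) (g c)) as [Hstay [M HM]].
  - lra.
  - lra.
  - intros x Hx; pose proof (Hdown x ltac:(lra)).
    pose proof (increasing_fixing_preserves f c d x fmono Fc Fd ltac:(lra)); lra.
  - intros x Hx; apply fcont; lra.
  - apply (no_overshooting_orbit G f g c M Hclose Gf Gg Hfc); try lra.
    + intro j; specialize (Hstay j); lra.
    + left; lra.
    + left; specialize (Hstay M); lra.
Qed.

Lemma no_crossing_from_outside (G : (R -> R) -> Prop) (f g : R -> R) (a b c d : R) :
  is_subgroup_Diff1plus G -> C1_close_to_id G -> G f -> G g ->
  successive_fixed g a b -> successive_fixed f c d ->
  moves_down g a b -> moves_up f c d -> c <= a -> a < d < b -> False.
Proof.
  intros [HD _] Hclose Gf Gg [Hab [Fa [Fb _]]] [Hcd [Fc [Fd _]]] Hdown Hup Hca Hd.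
  destruct (Diff1plus_basic g (HD g Gg)) as [_ [_ [_ gmono]]].
  destruct (Diff1plus_basic f (HD f Gf)) as [_ [_ [fcont fmono]]].
  pose proof Fa as [Ia _]; pose proof Fb as [Ib _]; pose proof Fd as [_ Hfd].
  unfold I01 in Ia, Ib.
  pose proof (increasing_fixing_preserves g a b d gmono Fa Fb ltac:(lra)).
  pose proof (Hdown d ltac:(lra)).
  pose proof (increasing_fixing_preserves g a b (g d) gmono Fa Fb ltac:(lra)).
  pose proof (Hdown (g d) ltac:(lra)).
  destruct (orbit_ascends_to_fixed_point f d (g (g d)) (g d)) as [Hstay [M HM]].
  - lra.
  - lra.
  - intros x Hx; pose proof (Hup x ltac:(lra)).
    pose proof (increasing_fixing_preserves f c d x fmono Fc Fd ltac:(lra)); lra.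
  - intros x Hx; apply fcont; lra.
  - apply (no_overshooting_orbit G f g d M Hclose Gf Gg Hfd); try lra.
    + intro j; specialize (Hstay j); lra.
    + right; lra.
    + right; specialize (Hstay M); lra.
Qed.

(* Two pairs of successive fixed points of G never have exactly one point of
   {c,d} inside (a,b): choosing the directions of motion suitably, this would
   produce one of the two crossing patterns above. *)
Lemma no_half_inclusion (G : (R -> R) -> Prop) (a b c d : R) :
  is_subgroup_Diff1plus G -> C1_close_to_id G ->
  pair_sfp G a b -> pair_sfp G c d -> ~ exactly_one_in a b c d.
Proof.
  intros HG Hclose Pab Pcd Hone.
  destruct (successive_fixed_both_directions G a b HG Pab)
    as [[gu [Ggu [Sgu Ugu]]] [gd [Ggd [Sgd Dgd]]]].
  destruct (successive_fixed_both_directions G c d HG Pcd)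
    as [[fu [Gfu [Sfu Ufu]]] [fd [Gfd [Sfd Dfd]]]].
  pose proof Sfu as [Hcd _].
  unfold exactly_one_in, in_open in Hone.
  destruct Hone as [[Hc Hd] | [Hc Hd]].
  - apply (no_crossing_from_inside G fd gu a b c d HG Hclose Gfd Ggu Sgu Sfd Ugu Dfd Hc).
    apply Rnot_lt_le; intro; apply Hd; lra.
  - apply (no_crossing_from_outside G fu gd a b c d HG Hclose Gfu Ggd Sgd Sfu Dgd Ufu);
      [| exact Hd].
    apply Rnot_lt_le; intro; apply Hc; lra.
Qed.

Theorem theoremt (G : (R -> R) -> Prop) :
  is_subgroup_Diff1plus G -> C1_close_to_id G -> without_linked_fixed_points G.
Proof.
  intros HG Hclose a b c d Pab Pcd [Hlink | Hlink].
  - exact (no_half_inclusion G a b c d HG Hclose Pab Pcd Hlink).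
  - exact (no_half_inclusion G c d a b HG Hclose Pcd Pab Hlink).
Qed.
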